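(* Let $G$ be a finite group of order $mn$ with identity $e$, let $H$ be a subgroup of $G$ of order $n$, and let $D=H\setminus\{e\}$. (i) If $S'$ is an $(mn,s,k,\lambda,\mu)$-DPDF (respectively, EPDF) in $G$ partitioning $D$, then $\mu=0$ and $S'$ is a near-complete $(n,s,k,\lambda)$-DDF (respectively, near-complete $(n,s,k,\lambda)$-EDF) in the group $H$. (ii) Every near-complete $(n,s,k,\lambda)$-DDF (respectively, EDF) in $H$, regarded as a family of subsets of $G$, is an $(mn,s,k,\lambda,0)$-DPDF (respectively, EPDF) in $G$ partitioning $D$.
   Context: Groups are written multiplicatively; $G^*=G\setminus\{e\}$. For $X\subseteq G$, $\Delta(X)$ is the multiset $\{xy^{-1}: x,y\in X, x\ne y\}$; for $X_1,X_2\subseteq G$, $\Delta(X_1,X_2)$ is the multiset $\{xy^{-1}:x\in X_1,y\in X_2\}$. For a family $A=\{A_1,\dots,A_s\}$ of pairwise disjoint subsets, ${\rm Int}(A)=\bigcup_i\Delta(A_i)$ and ${\rm Ext}(A)=\bigcup_{i\ne j}\Delta(A_i,A_j)$ (multiset unions). For $|G|=v$, a $(v,s,k,\lambda,\mu)$-DPDF is a family of $s$ pairwise disjoint $k$-subsets of $G^*$ with union $S$ such that ${\rm Int}(A)$ contains each element of $S$ exactly $\lambda$ times and each element of $G\setminus(S\cup\{e\})$ exactly $\mu$ times; a $(v,s,k,\lambda,\mu)$-EPDF is defined the same way using ${\rm Ext}(A)$. In a group $H$ of order $n$, an $(n,s,k,\lambda)$-disjoint difference family (DDF) is a family of $s$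 pairwise disjoint $k$-subsets of $H$ such that ${\rm Int}(A)$ contains each non-identity element of $H$ exactly $\lambda$ times; an $(n,s,k,\lambda)$-external difference family (EDF) is a family of $s$ pairwise disjoint $k$-subsets of $H\setminus\{e\}$ such that ${\rm Ext}(A)$ contains each non-identity element of $H$ exactly $\lambda$ times. Such a family is near-complete if it partitions $H\setminus\{e\}$ (i.e. its sets are pairwise disjoint with union $H\setminus\{e\}$). *)

From mathcomp Require Import all_boot all_fingroup.
Set Implicit Arguments. Unset Strict Implicit. Unset Printing Implicit Defensive.



Section Defs.
Variable gT : finGroupType.

Definition int_mult (s : nat) (A : 'I_s -> {set gT}) (g : gT) : nat :=
  \sum_(i < s) #|[set xy in setX (A i) (A i) |
                   (xy.1 != xy.2) && ((xy.1 * xy.2^-1)%g == g)]|.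

Definition ext_mult (s : nat) (A : 'I_s -> {set gT}) (g : gT) : nat :=
  \sum_(i < s) \sum_(j < s | i != j)
     #|[set xy in setX (A i) (A j) | (xy.1 * xy.2^-1)%g == g]|.

Definition pairwise_disjoint (s : nat) (A : 'I_s -> {set gT}) : Prop :=
  forall i j : 'I_s, i != j -> [disjoint A i & A j].

Definition fam_union (s : nat) (A : 'I_s -> {set gT}) : {set gT} :=
  \bigcup_(i < s) A i.

Definition pdf_base (G : {group gT}) (v s k : nat) (A : 'I_s -> {set gT}) :=
  [/\ #|G| = v, pairwise_disjoint A &
      forall i, A i \subset G^#%g /\ #|A i| = k].

Definition is_DPDF (G : {group gT}) (v s k lam mu : nat) (A : 'I_s -> {set gT}) :=
  pdf_base G v k A /\
  (forall g, g \in G^#%g ->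
     (g \in fam_union A -> int_mult A g = lam) /\
     (g \notin fam_union A -> int_mult A g = mu)).

Definition is_EPDF (G : {group gT}) (v s k lam mu : nat) (A : 'I_s -> {set gT}) :=
  pdf_base G v k A /\
  (forall g, g \in G^#%g ->
     (g \in fam_union A -> ext_mult A g = lam) /\
     (g \notin fam_union A -> ext_mult A g = mu)).

Definition is_DDF (H : {group gT}) (n s k lam : nat) (A : 'I_s -> {set gT}) :=
  [/\ #|H| = n, pairwise_disjoint A,
      (forall i, A i \subset H /\ #|A i| = k) &
      forall g, g \in H^#%g -> int_mult A g = lam].

Definition is_EDF (H : {group gT}) (n s k lam : nat) (A : 'I_s -> {set gT}) :=
  [/\ #|H| = n, pairwise_disjoint A,
      (forall i, A i \subset H^#%g /\ #|A i| = k) &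
      forall g, g \in H^#%g -> ext_mult A g = lam].

Definition near_complete (H : {group gT}) (s : nat) (A : 'I_s -> {set gT}) :=
  pairwise_disjoint A /\ fam_union A = H^#%g.

End Defs.

(** The quotient of two elements of the subgroup H lies in H, so when every
    block of the family lies in H, no element of G outside H occurs as an
    internal or external difference.  If the union of the family is H \ {e},
    the DPDF (EPDF) conditions in G thus say that every element of H \ {e}
    occurs lam times, i.e. that the family is a DDF (EDF) in H, and that every
    element of G \ H occurs 0 times; the latter forces mu = 0 as soon as
    G \ H is nonempty, that is as soon as m > 1. *)

From mathcomp Require Import all_boot all_fingroup.
Set Implicit Arguments. Unset Strict Implicit. Unset Printing Implicit Defensive.

Section Subgroup.
Variables (gT : finGroupType) (G H : {group gT}).

Lemma sub_fam_union s (A : 'I_s -> {set gT}) i : A i \subset fam_union A.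
Proof. exact: (bigcup_sup i). Qed.

Lemma proper_card_mul m : H \subset G -> #|G| = (m * #|H|)%N -> 1 < m -> H \proper G.
Proof. by move=> sHG cardG m_gt1; rewrite properEcard sHG cardG ltn_Pmull. Qed.

Lemma proper_setD1_notin : H \proper G -> exists2 g, g \in G^#%g & g \notin H.
Proof.
case/properP=> _ [g gG gH]; exists g => //; rewrite !inE gG andbT.
by apply: contraNneq gH => ->.
Qed.

Section Multiplicities.
Variables (s : nat) (A : 'I_s -> {set gT}).
Hypothesis sAH : forall i, A i \subset H.

Lemma mulgV_outside_neq g x y i j :
  g \notin H -> x \in A i -> y \in A j -> (x * y^-1)%g != g.
Proof.
move=> gH xA yA; apply: contraNneq gH => <-.
by rewrite groupM ?groupV ?(subsetP (sAH i) x xA) ?(subsetP (sAH j) y yA).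
Qed.

Lemma int_mult_outside g : g \notin H -> int_mult A g = 0.
Proof.
move=> gH; rewrite /int_mult big1 // => i _; apply/eqP; rewrite cards_eq0 -subset0.
apply/subsetP=> -[x y]; rewrite !inE /= => /andP[/andP[xA yA] /andP[_ xy_g]].
by rewrite (negbTE (mulgV_outside_neq gH xA yA)) in xy_g.
Qed.

Lemma ext_mult_outside g : g \notin H -> ext_mult A g = 0.
Proof.
move=> gH; rewrite /ext_mult big1 // => i _; rewrite big1 // => j _.
apply/eqP; rewrite cards_eq0 -subset0.
apply/subsetP=> -[x y]; rewrite !inE /= => /andP[/andP[xA yA] xy_g].
by rewrite (negbTE (mulgV_outside_neq gH xA yA)) in xy_g.
Qed.

End Multiplicities.

Definition partial_counts (f : gT -> nat) (U : {set gT}) (lam mu : nat) :=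
  forall g, g \in G^#%g -> (g \in U -> f g = lam) /\ (g \notin U -> f g = mu).

Section Transfer.
Hypothesis sHG : H \subset G.

Section Counts.
Variable f : gT -> nat.

Lemma partial_counts_in lam mu :
  partial_counts f H^#%g lam mu -> {in H^#%g, forall g, f g = lam}.
Proof. by move=> cf g gH; apply: (cf g (subsetP (setSD _ sHG) g gH)).1. Qed.

Hypothesis f_out : forall g, g \notin H -> f g = 0.

Lemma partial_counts_mu0 lam mu :
  H \proper G -> partial_counts f H^#%g lam mu -> mu = 0.
Proof.
case/proper_setD1_notin=> g gG gH /(_ g gG) [_ <-]; first exact: f_out.
by rewrite !inE (negbTE gH) andbF.
Qed.

Lemma partial_counts_extend lam :
  {in H^#%g, forall g, f g = lam} -> partial_counts f H^#%g lam 0.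
Proof.
move=> f_in g gG; split; first exact: f_in.
by case/setD1P: gG => g_neq1 _; rewrite !inE g_neq1 => /f_out.
Qed.

End Counts.

Section Families.
Variables (s k lam : nat) (A : 'I_s -> {set gT}).
Hypothesis unionA : fam_union A = H^#%g.

Lemma fam_union_setD1_sub i : A i \subset H^#%g.
Proof. by rewrite -unionA sub_fam_union. Qed.

Lemma fam_union_setD1_subgroup i : A i \subset H.
Proof. exact: subset_trans (fam_union_setD1_sub i) (subD1set _ _). Qed.

Lemma DPDF_mu0 v mu : H \proper G -> is_DPDF G v k lam mu A -> mu = 0.
Proof.
move=> HpG [_]; rewrite unionA => counts.
exact: (partial_counts_mu0 (int_mult_outside fam_union_setD1_subgroup) HpG counts).
Qed.

Lemma EPDF_mu0 v mu : H \proper G -> is_EPDF G v k lam mu A -> mu = 0.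
Proof.
move=> HpG [_]; rewrite unionA => counts.
exact: (partial_counts_mu0 (ext_mult_outside fam_union_setD1_subgroup) HpG counts).
Qed.

Lemma DPDF_DDF v mu : is_DPDF G v k lam mu A -> is_DDF H #|H| k lam A.
Proof.
move=> [[_ dA cardA]]; rewrite unionA => /partial_counts_in int_lam.
split=> // i; split; [exact: fam_union_setD1_subgroup | exact: (cardA i).2].
Qed.

Lemma EPDF_EDF v mu : is_EPDF G v k lam mu A -> is_EDF H #|H| k lam A.
Proof.
move=> [[_ dA cardA]]; rewrite unionA => /partial_counts_in ext_lam.
split=> // i; split; [exact: fam_union_setD1_sub | exact: (cardA i).2].
Qed.

Lemma DDF_DPDF n : is_DDF H n k lam A -> is_DPDF G #|G| k lam 0 A.
Proof.
case=> _ dA cardA int_lam; split; last first.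
  rewrite unionA.
  exact: (partial_counts_extend (int_mult_outside fam_union_setD1_subgroup) int_lam).
split=> // i; split; last exact: (cardA i).2.
exact: subset_trans (fam_union_setD1_sub i) (setSD _ sHG).
Qed.

Lemma EDF_EPDF n : is_EDF H n k lam A -> is_EPDF G #|G| k lam 0 A.
Proof.
case=> _ dA cardA ext_lam; split; last first.
  rewrite unionA.
  exact: (partial_counts_extend (ext_mult_outside fam_union_setD1_subgroup) ext_lam).
split=> // i; split; last exact: (cardA i).2.
exact: subset_trans (fam_union_setD1_sub i) (setSD _ sHG).
Qed.

End Families.
End Transfer.
End Subgroup.

Theorem mainTheorem12 (gT : finGroupType) (G H : {group gT}) (m n : nat) :
  #|G| = (m * n)%N -> H \subset G -> #|H| = n ->
  (* (i), DPDF case *)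
  (forall (s k lam mu : nat) (A : 'I_s -> {set gT}),
     is_DPDF G (m * n) k lam mu A -> fam_union A = H^#%g ->
     (1 < m -> mu = 0) /\ (is_DDF H n k lam A /\ near_complete H A)) /\
  (* (i), EPDF case *)
  (forall (s k lam mu : nat) (A : 'I_s -> {set gT}),
     is_EPDF G (m * n) k lam mu A -> fam_union A = H^#%g ->
     (1 < m -> mu = 0) /\ (is_EDF H n k lam A /\ near_complete H A)) /\
  (* (ii), DDF case *)
  (forall (s k lam : nat) (A : 'I_s -> {set gT}),
     is_DDF H n k lam A -> near_complete H A ->
     is_DPDF G (m * n) k lam 0 A /\ fam_union A = H^#%g) /\
  (* (ii), EDF case *)
  (forall (s k lam : nat) (A : 'I_s -> {set gT}),
     is_EDF H n k lam A -> near_complete H A ->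
     is_EPDF G (m * n) k lam 0 A /\ fam_union A = H^#%g).
Proof.
move=> cardG sHG cardH.
have properHG : 1 < m -> H \proper G by apply: proper_card_mul; rewrite // cardH.
split; [|split; [|split]].
- move=> s k lam mu A DA unionA; have [[_ dA _] _] := DA.
  split; first by move/properHG=> HpG; exact: (DPDF_mu0 unionA HpG DA).
  split; last by split.
  by have := DPDF_DDF sHG unionA DA; rewrite cardH.
- move=> s k lam mu A EA unionA; have [[_ dA _] _] := EA.
  split; first by move/properHG=> HpG; exact: (EPDF_mu0 unionA HpG EA).
  split; last by split.
  by have := EPDF_EDF sHG unionA EA; rewrite cardH.
- move=> s k lam A DA [_ unionA]; split=> //.
  by have := DDF_DPDF sHG unionA DA; rewrite cardG.
- move=> s k lam A EA [_ unionA]; split=> //.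
  by have := EDF_EPDF sHG unionA EA; rewrite cardG.
Qed.
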